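(* Let $\epsilon>0$, $\eta:=\mathrm{i}\epsilon$ and $p:=\frac12-\frac1\eta=\frac12+\frac{\mathrm{i}}{\epsilon}$. Let $\mathfrak{H}_a$ be the Hilbert space with orthonormal basis $\{|j,k,l\rangle: j,k,l\in\mathbb{Z}_{\ge0}\}$ and define on it the operators $\mathbf{b}_{\uparrow}^\dagger|j,k,l\rangle=\sqrt{j+1}|j+1,k,l\rangle$, $\mathbf{b}_{\uparrow}|j,k,l\rangle=\sqrt{j}|j-1,k,l\rangle$, $\mathbf{b}_{\downarrow}^\dagger|j,k,l\rangle=\sqrt{k+1}|j,k+1,l\rangle$, $\mathbf{b}_{\downarrow}|j,k,l\rangle=\sqrt{k}|j,k-1,l\rangle$, $\mathbf{s}^{+}|j,k,l\rangle=l|j,k,l-1\rangle$, $\mathbf{s}^{-}|j,k,l\rangle=(2p-l)|j,k,l+1\rangle$, $\mathbf{s}^{z}|j,k,l\rangle=(p-l)|j,k,l\rangle$. Set \begin{align*} &\mathbf{t}^{+}=\mathbf{b}_{\uparrow},\quad \mathbf{t}^{-}=\eta\,\mathbf{b}_{\uparrow}^\dagger,\quad \mathbf{u}^{+}=\eta\,\mathbf{b}_{\downarrow},\quad \mathbf{u}^{-}=\mathbf{b}_{\downarrow}^\dagger,\\ &\mathbf{v}^{+}=\eta(\mathbf{b}_{\uparrow}\mathbf{b}_{\downarrow}+\mathbf{s}^{+}),\quad \mathbf{v}^{-}=\eta(\mathbf{b}_{\uparrow}^\dagger\mathbf{b}_{\downarrow}^\dagger-\mathbf{s}^{-}),\\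 &\mathbf{l}^{\uparrow}=\eta\big(\mathbf{b}_{\uparrow}^\dagger\mathbf{b}_{\uparrow}+\tfrac12-\mathbf{s}^{z}\big),\quad \mathbf{l}^{\downarrow}=\eta\big(\mathbf{b}_{\downarrow}^\dagger\mathbf{b}_{\downarrow}+\tfrac12-\mathbf{s}^{z}\big),\quad \mathbf{l}^{0}=\mathbb{1}, \end{align*} and $|\mathrm{vac}\rangle=|0,0,0\rangle$. Then these operators generate an irreducible representation of the Lie algebra $\mathfrak{g}$ defined by the commutation relations \begin{align*} &[\mathbf{u}^{+},\mathbf{t}^{\pm}]=[\mathbf{u}^{-},\mathbf{t}^{\pm}]=[\mathbf{u}^{\pm},\mathbf{v}^{\pm}]=[\mathbf{t}^{\pm},\mathbf{v}^{\pm}]=0,\quad [\mathbf{l}^{\uparrow},\mathbf{u}^{\pm}]=[\mathbf{l}^{\downarrow},\mathbf{t}^{\pm}]=[\mathbf{l}^{\uparrow},\mathbf{l}^{\downarrow}]=0,\\ &[\mathbf{l}^{\uparrow},\mathbf{t}^{\pm}]=\mp\eta\,\mathbf{t}^{\pm},\quad [\mathbf{l}^{\downarrow},\mathbf{u}^{\pm}]=\mp\eta\,\mathbf{u}^{\pm},\quad [\mathbf{u}^{+},\mathbf{v}^{\mp}]=\pm\mathbf{t}^{\mp},\quad [\mathbf{t}^{\pm},\mathbf{v}^{\mp}]=\pm\eta\,\mathbf{u}^{\mp},\\ &[\mathbf{l}^{\uparrow},\mathbf{v}^{\pm}]=[\mathbf{l}^{\downarrow},\mathbf{v}^{\pm}]=\mp\eta\,\mathbf{v}^{\pm},\quad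 [\mathbf{v}^{+},\mathbf{v}^{-}]=\eta(\mathbf{l}^{\uparrow}+\mathbf{l}^{\downarrow}),\quad [\mathbf{t}^{+},\mathbf{t}^{-}]=[\mathbf{u}^{+},\mathbf{u}^{-}]=\eta\,\mathbf{l}^{0},\\ &[\mathbf{l}^{\uparrow},\mathbf{l}^{0}]=[\mathbf{l}^{\downarrow},\mathbf{l}^{0}]=[\mathbf{u}^{\pm},\mathbf{l}^{0}]=[\mathbf{v}^{\pm},\mathbf{l}^{0}]=[\mathbf{t}^{\pm},\mathbf{l}^{0}]=0, \end{align*} which moreover satisfies the boundary requirements $\mathbf{l}^{\uparrow}|\mathrm{vac}\rangle=\mathbf{l}^{0}|\mathrm{vac}\rangle=\mathbf{l}^{\downarrow}|\mathrm{vac}\rangle=|\mathrm{vac}\rangle$, $\langle\mathrm{vac}|\mathbf{l}^{\uparrow}=\langle\mathrm{vac}|\mathbf{l}^{0}=\langle\mathrm{vac}|\mathbf{l}^{\downarrow}=\langle\mathrm{vac}|$, $\mathbf{t}^{+}|\mathrm{vac}\rangle=\mathbf{u}^{+}|\mathrm{vac}\rangle=\mathbf{v}^{+}|\mathrm{vac}\rangle=0$, $\langle\mathrm{vac}|\mathbf{t}^{-}=\langle\mathrm{vac}|\mathbf{u}^{-}=\langle\mathrm{vac}|\mathbf{v}^{-}=0$.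
   Context: Operators are understood on the dense domain of finite linear combinations of basis vectors; $\mathbf{b}_\uparrow,\mathbf{b}_\downarrow$ are two canonical bosonic modes and $\mathbf{s}^{\pm},\mathbf{s}^z$ act as a lowest/highest-weight (Verma) module of $\mathfrak{sl}_2$ with complex weight $p$. *)

(* Complex scalars: an arbitrary numClosedFieldType C
   (e.g. algC, or complex R for R : rcfType); this contains the case C = ℂ. *)
From HB Require Import structures.
From mathcomp Require Import all_boot all_order all_algebra.
Set Implicit Arguments. Unset Strict Implicit. Unset Printing Implicit Defensive.
Import Order.TTheory GRing.Theory Num.Theory.
Local Open Scope ring_scope.

Section Fock.
Variable C : numClosedFieldType.

(* A vector is given by its coefficients on the basis |j,k,l>. *)
Definition vec := nat -> nat -> nat -> C.
Definition op := vec -> vec.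

(* The dense domain: finite linear combinations of basis vectors. *)
Definition fin_supp (v : vec) : Prop :=
  exists N : nat, forall j k l, (N <= j + k + l)%N -> v j k l = 0.

Definition vzero : vec := fun _ _ _ => 0.
Definition vadd (v w : vec) : vec := fun j k l => v j k l + w j k l.
Definition vscale (a : C) (v : vec) : vec := fun j k l => a * v j k l.
Definition vsub (v w : vec) : vec := fun j k l => v j k l - w j k l.

Definition vac : vec := fun j k l => if [&& j == 0%N, k == 0%N & l == 0%N] then 1 else 0.
(* <vac| v : the coefficient of |0,0,0> *)
Definition vac_coef (v : vec) : C := v 0%N 0%N 0%N.

Definition opadd (A B : op) : op := fun v => vadd (A v) (B v).
Definition opsub (A B : op) : op := fun v => vsub (A v) (B v).
Definition opscale (a : C) (A : op) : op := fun v => vscale a (A v).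
Definition opcomp (A B : op) : op := fun v => A (B v).
Definition opid : op := fun v => v.
Definition opzero : op := fun _ => vzero.
Definition comm (A B : op) : op := opsub (opcomp A B) (opcomp B A).

Definition opeq (A B : op) : Prop := forall v, fin_supp v -> A v = B v.

(* Coefficient formulas of the operators.  E.g. b_up |j+1,k,l> = sqrt(j+1)|j,k,l>,
   so the |j,k,l>-coefficient of b_up v is sqrt(j+1) * v(j+1,k,l). *)
Definition b_up : op := fun v j k l => sqrtC (j.+1)%:R * v j.+1 k l.
Definition b_up_dag : op := fun v j k l =>
  if j is j'.+1 then sqrtC (j'.+1)%:R * v j' k l else 0.
Definition b_dn : op := fun v j k l => sqrtC (k.+1)%:R * v j k.+1 l.
Definition b_dn_dag : op := fun v j k l =>
  if k is k'.+1 then sqrtC (k'.+1)%:R * v j k' l else 0.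

Variable p : C.
(* s^+ |j,k,l> = l |j,k,l-1> *)
Definition s_plus : op := fun v j k l => (l.+1)%:R * v j k l.+1.
(* s^- |j,k,l> = (2p - l) |j,k,l+1> *)
Definition s_minus : op := fun v j k l =>
  if l is l'.+1 then (2 * p - l'%:R) * v j k l' else 0.
Definition s_z : op := fun v j k l => (p - l%:R) * v j k l.

End Fock.

Section Rep.
Variable C : numClosedFieldType.
Variable eps : C.

Definition etaE : C := 'i * eps.
Definition pw : C := 2^-1 - etaE^-1.

Definition t_plus : op C := b_up (C:=C).
Definition t_minus : op C := opscale etaE (b_up_dag (C:=C)).
Definition u_plus : op C := opscale etaE (b_dn (C:=C)).
Definition u_minus : op C := b_dn_dag (C:=C).
Definition v_plus : op C :=
  opscale etaE (opadd (opcomp (b_up (C:=C)) (b_dn (C:=C))) (s_plus (C:=C))).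
Definition v_minus : op C :=
  opscale etaE (opsub (opcomp (b_up_dag (C:=C)) (b_dn_dag (C:=C))) (s_minus pw)).
Definition l_up : op C :=
  opscale etaE (opsub (opadd (opcomp (b_up_dag (C:=C)) (b_up (C:=C))) (opscale 2^-1 (@opid C)))
                     (s_z pw)).
Definition l_dn : op C :=
  opscale etaE (opsub (opadd (opcomp (b_dn_dag (C:=C)) (b_dn (C:=C))) (opscale 2^-1 (@opid C)))
                     (s_z pw)).
Definition l_0 : op C := @opid C.

Definition is_generator (A : op C) : Prop :=
  A = t_plus \/ A = t_minus \/ A = u_plus \/ A = u_minus \/ A = v_plus \/
  A = v_minus \/ A = l_up \/ A = l_dn \/ A = l_0.

(* algebraic irreducibility on the dense domain D of finite linear combinations:
   every subspace W of D, invariant under all generators and containing a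
   nonzero vector, is all of D. *)
Definition irreducible_on_D (gens : op C -> Prop) : Prop :=
  forall W : vec C -> Prop,
    (forall v, W v -> fin_supp v) ->
    W (@vzero C) ->
    (forall v w, W v -> W w -> W (vadd v w)) ->
    (forall a v, W v -> W (vscale a v)) ->
    (forall A v, gens A -> W v -> W (A v)) ->
    (exists v, W v /\ v <> @vzero C) ->
    forall v, fin_supp v -> W v.

End Rep.

(** The commutation relations and the boundary requirements are identities
    between coefficients, verified index by index.  For irreducibility, the
    annihilators b_up, b_dn and s^+ lower the total degree j + k + l and
    commute with each other.  Applying them in turn to a nonzero finitely
    supported vector of an invariant subspace W, each as long as the result
    stays nonzero, gives a nonzero vector of W killed by all three, that is a
    multiple of |vac>.  Conversely b_up^dag, b_dn^dag and s^- send basis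
    vectors to nonzero multiples of basis vectors (for s^- because 2p - l has
    imaginary part 2/eps), so W contains every basis vector, hence every
    finite linear combination of them. *)

From HB Require Import structures.
From mathcomp Require Import all_boot all_order all_algebra.
From mathcomp Require Import ring zify.
From Stdlib Require Import FunctionalExtensionality Classical.
Set Implicit Arguments. Unset Strict Implicit. Unset Printing Implicit Defensive.
Import Order.TTheory GRing.Theory Num.Theory.
Local Open Scope ring_scope.

Lemma iter_last_nonzero (A : Type) (P : A -> Prop) (T : A -> A) (z a : A) (n : nat) :
  (forall x, P x -> P (T x)) -> P a -> a <> z -> iter n T a = z ->
  exists2 x, P x & x <> z /\ T x = z.
Proof.
move=> PT; elim: n a => [|n IH] a Pa az //.
rewrite iterSr; case: (classic (T a = z)) => [Taz _ | Taz]; first by exists a.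
exact: IH (PT _ Pa) Taz.
Qed.

Section Vectors.
Variable C : numClosedFieldType.

Lemma vec_ext (v w : vec C) : (forall j k l, v j k l = w j k l) -> v = w.
Proof.
move=> vw; apply: functional_extensionality => j.
apply: functional_extensionality => k; apply: functional_extensionality => l; exact: vw.
Qed.

Lemma vscaleK (a : C) (v : vec C) : a != 0 -> vscale a^-1 (vscale a v) = v.
Proof. by move=> a0; apply: vec_ext => j k l; rewrite /vscale mulrA mulVf ?mul1r. Qed.

Definition vanish_from (N : nat) (v : vec C) : Prop :=
  forall j k l, (N <= j + k + l)%N -> v j k l = 0.

Lemma vanish_from0 (v : vec C) : vanish_from 0 v -> v = vzero C.
Proof. by move=> v0; apply: vec_ext => j k l; apply: v0. Qed.

Lemma vanish_fromW (N M : nat) (v : vec C) :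
  (N <= M)%N -> vanish_from N v -> vanish_from M v.
Proof. by move=> NM vN j k l lt; apply: vN; apply: leq_trans lt. Qed.

Lemma vanish_from_vadd N (v w : vec C) :
  vanish_from N v -> vanish_from N w -> vanish_from N (vadd v w).
Proof. by move=> vN wN j k l lt; rewrite /vadd vN ?wN ?addr0. Qed.

Lemma vanish_from_vsub N (v w : vec C) :
  vanish_from N v -> vanish_from N w -> vanish_from N (vsub v w).
Proof. by move=> vN wN j k l lt; rewrite /vsub vN ?wN ?subr0. Qed.

Lemma vanish_from_vscale N a (v : vec C) : vanish_from N v -> vanish_from N (vscale a v).
Proof. by move=> vN j k l lt; rewrite /vscale vN ?mulr0. Qed.

Definition lowering (T : op C) : Prop :=
  forall N v, vanish_from N v -> vanish_from N.-1 (T v).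
Definition raising (T : op C) : Prop :=
  forall N v, vanish_from N v -> vanish_from N.+1 (T v).

Lemma lowering_b_up : lowering (@b_up C).
Proof. by move=> N v vN j k l lt; rewrite /b_up vN ?mulr0 //; lia. Qed.

Lemma lowering_b_dn : lowering (@b_dn C).
Proof. by move=> N v vN j k l lt; rewrite /b_dn vN ?mulr0 //; lia. Qed.

Lemma lowering_s_plus : lowering (@s_plus C).
Proof. by move=> N v vN j k l lt; rewrite /s_plus vN ?mulr0 //; lia. Qed.

Lemma raising_b_up_dag : raising (@b_up_dag C).
Proof. by move=> N v vN [|j] k l lt //=; rewrite vN ?mulr0 //; lia. Qed.

Lemma raising_b_dn_dag : raising (@b_dn_dag C).
Proof. by move=> N v vN j [|k] l lt //=; rewrite vN ?mulr0 //; lia. Qed.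

Lemma raising_s_minus p : raising (s_minus p).
Proof. by move=> N v vN j k [|l] lt //=; rewrite vN ?mulr0 //; lia. Qed.

Lemma vanish_from_s_z p N v : vanish_from N v -> vanish_from N (s_z p v).
Proof. by move=> vN j k l lt; rewrite /s_z vN ?mulr0. Qed.

Lemma lowering_iter_vanish T N v : lowering T -> vanish_from N v -> iter N T v = vzero C.
Proof.
move=> lowT; elim: N v => [|N IH] v vN; first exact: vanish_from0.
by rewrite iterSr; apply: IH; apply: lowT vN.
Qed.

Lemma vanish_from_lowering T N v : lowering T -> vanish_from N v -> vanish_from N (T v).
Proof. by move=> lowT vN; apply: vanish_fromW (lowT _ _ vN); apply: leq_pred. Qed.

Lemma lowering_kernel_nonzero (P : vec C -> Prop) (T : op C) N v :
  lowering T -> (forall x, P x -> P (T x)) -> P v -> vanish_from N v -> v <> vzero C ->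
  exists2 w, P w /\ vanish_from N w & w <> vzero C /\ T w = vzero C.
Proof.
move=> lowT PT Pv vN nz.
apply: (iter_last_nonzero (n := N)) (conj Pv vN) nz (lowering_iter_vanish lowT vN).
by move=> x [Px xN]; split; [apply: PT | apply: vanish_from_lowering].
Qed.

Lemma fin_supp_lowering T : lowering T -> forall v, fin_supp v -> fin_supp (T v).
Proof. by move=> lowT v [N vN]; exists N.-1; apply: lowT. Qed.

Lemma fin_supp_raising T : raising T -> forall v, fin_supp v -> fin_supp (T v).
Proof. by move=> raiT v [N vN]; exists N.+1; apply: raiT. Qed.

Lemma fin_supp_vadd (v w : vec C) : fin_supp v -> fin_supp w -> fin_supp (vadd v w).
Proof.
move=> [N vN] [M wM]; exists (N + M)%N.
by apply: vanish_from_vadd; [apply: vanish_fromW vN | apply: vanish_fromW wM]; lia.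
Qed.

Lemma fin_supp_vsub (v w : vec C) : fin_supp v -> fin_supp w -> fin_supp (vsub v w).
Proof.
move=> [N vN] [M wM]; exists (N + M)%N.
by apply: vanish_from_vsub; [apply: vanish_fromW vN | apply: vanish_fromW wM]; lia.
Qed.

Lemma fin_supp_vscale a (v : vec C) : fin_supp v -> fin_supp (vscale a v).
Proof. by move=> [N vN]; exists N; apply: vanish_from_vscale. Qed.

Lemma fin_supp_s_z p (v : vec C) : fin_supp v -> fin_supp (s_z p v).
Proof. by move=> [N vN]; exists N; apply: vanish_from_s_z. Qed.

Lemma fin_supp_generator eps A (v : vec C) :
  is_generator eps A -> fin_supp v -> fin_supp (A v).
Proof.
move=> genA fv.
case: genA => [->|[->|[->|[->|[->|[->|[->|[->|->]]]]]]]];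
rewrite /t_plus /t_minus /u_plus /u_minus /v_plus /v_minus /l_up /l_dn /l_0
  /opscale /opadd /opsub /opcomp /opid;
repeat first
  [ exact: fv | apply: fin_supp_vsub | apply: fin_supp_vadd | apply: fin_supp_vscale
  | apply: fin_supp_s_z
  | apply: (fin_supp_lowering lowering_b_up) | apply: (fin_supp_lowering lowering_b_dn)
  | apply: (fin_supp_lowering lowering_s_plus) | apply: (fin_supp_raising raising_b_up_dag)
  | apply: (fin_supp_raising raising_b_dn_dag) | apply: (fin_supp_raising (raising_s_minus _)) ].
Qed.

End Vectors.

Section Basis.
Variable C : numClosedFieldType.

Lemma sqrt_nat_succ_neq0 n : sqrtC n.+1%:R != 0 :> C.
Proof. by rewrite sqrtC_eq0 pnatr_eq0. Qed.

Lemma b_up_b_dn_comm (v : vec C) : b_up (b_dn v) = b_dn (b_up v).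
Proof. by apply: vec_ext => j k l; rewrite /b_up /b_dn mulrCA. Qed.

Lemma b_up_s_plus_comm (v : vec C) : b_up (s_plus v) = s_plus (b_up v).
Proof. by apply: vec_ext => j k l; rewrite /b_up /s_plus mulrCA. Qed.

Lemma b_dn_s_plus_comm (v : vec C) : b_dn (s_plus v) = s_plus (b_dn v).
Proof. by apply: vec_ext => j k l; rewrite /b_dn /s_plus mulrCA. Qed.

Lemma b_dn0 : b_dn (vzero C) = vzero C.
Proof. by apply: vec_ext => j k l; rewrite /b_dn mulr0. Qed.

Lemma s_plus0 : s_plus (vzero C) = vzero C.
Proof. by apply: vec_ext => j k l; rewrite /s_plus mulr0. Qed.

Lemma lowest_weight_vac (w : vec C) :
  b_up w = vzero C -> b_dn w = vzero C -> s_plus w = vzero C ->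
  w = vscale (vac_coef w) (vac C).
Proof.
move=> upw dnw spw.
have coef0 (c x : C) : c != 0 -> c * x = 0 -> x = 0.
  by move=> c0 /eqP; rewrite mulf_eq0 (negPf c0) => /eqP.
have w_j j k l : w j.+1 k l = 0.
  exact: coef0 (sqrt_nat_succ_neq0 j) (congr1 (fun f => f j k l) upw).
have w_k j k l : w j k.+1 l = 0.
  exact: coef0 (sqrt_nat_succ_neq0 k) (congr1 (fun f => f j k l) dnw).
have w_l j k l : w j k l.+1 = 0.
  by apply: coef0 (congr1 (fun f => f j k l) spw); rewrite pnatr_eq0.
apply: vec_ext => -[|j] [|k] [|l]; rewrite /vscale /vac /vac_coef /= ?mulr1 ?mulr0 //;
  by rewrite ?w_j ?w_k ?w_l.
Qed.

Definition basis_vec (a b c : nat) : vec C :=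
  fun j k l => if [&& j == a, k == b & l == c] then 1 else 0.

Lemma b_up_dag_basis a b c :
  b_up_dag (basis_vec a b c) = vscale (sqrtC a.+1%:R) (basis_vec a.+1 b c).
Proof.
apply: vec_ext => -[|j] k l; rewrite /vscale /basis_vec /= ?mulr0 //.
by rewrite eqSS; case: (eqVneq j a) => [-> | _] /=; rewrite ?mulr0.
Qed.

Lemma b_dn_dag_basis a b c :
  b_dn_dag (basis_vec a b c) = vscale (sqrtC b.+1%:R) (basis_vec a b.+1 c).
Proof.
apply: vec_ext => j [|k] l; rewrite /vscale /basis_vec /= ?andbF ?mulr0 //.
by rewrite eqSS; case: (eqVneq k b) => [-> | _] /=; rewrite ?andbF ?mulr0.
Qed.

Lemma s_minus_basis p a b c :
  s_minus p (basis_vec a b c) = vscale (2 * p - c%:R) (basis_vec a b c.+1).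
Proof.
apply: vec_ext => j k [|l]; rewrite /vscale /basis_vec /= ?andbF ?mulr0 //.
by rewrite eqSS; case: (eqVneq l c) => [-> | _] /=; rewrite ?andbF ?mulr0.
Qed.

Lemma basis_expansion N (v : vec C) :
  vanish_from N v ->
  v = \big[@vadd C/vzero C]_(x : 'I_N * 'I_N * 'I_N)
        vscale (v x.1.1 x.1.2 x.2) (basis_vec x.1.1 x.1.2 x.2).
Proof.
move=> vN; apply: vec_ext => a b c.
rewrite (big_morph (fun f : vec C => f a b c) (id1 := 0) (op1 := +%R)) //.
rewrite /vscale /basis_vec.
case: (boolP [&& (a < N)%N, (b < N)%N & (c < N)%N]) => [/and3P [aN bN cN] | out].
  rewrite (bigD1 (Ordinal aN, Ordinal bN, Ordinal cN)) //= !eqxx mulr1 big1 ?addr0 //.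
  move=> [[i1 i2] i3] /= ne; case: and3P => [[/eqP a_i1 /eqP b_i2 /eqP c_i3] | _];
    last by rewrite mulr0.
  by case/eqP: ne; congr (_, _, _); apply: val_inj.
rewrite vN; last by move: out; rewrite !negb_and -!leqNgt; lia.
rewrite big1 // => -[[i1 i2] i3] _ /=; case: and3P => [[/eqP a_i1 /eqP b_i2 /eqP c_i3] | _];
  last by rewrite mulr0.
by move: out; rewrite a_i1 b_i2 c_i3 !ltn_ord.
Qed.

End Basis.

Section Irreducibility.
Variable C : numClosedFieldType.
Variable eps : C.
Hypothesis eps_real : eps \is Num.real.
Hypothesis eps_neq0 : eps != 0.

Lemma etaE_neq0 : etaE eps != 0.
Proof. by rewrite mulf_neq0 ?neq0Ci. Qed.

Lemma s_minus_coef_neq0 (n : nat) : 2 * pw eps - n%:R != 0.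
Proof.
have -> : 2 * pw eps - n%:R = (1 - n%:R) + 'i * (2 / eps).
  rewrite /pw /etaE invfM invCi; field; exact: eps_neq0.
apply/eqP => /(congr1 (@Im _)); rewrite Im_rect ?rpredB ?realn ?realM ?realV ?real1 //.
by move/Creal_ImP: (real0 C) => ->; apply/eqP; rewrite mulf_neq0 ?invr_eq0 ?pnatr_eq0.
Qed.

Section Invariant.
Variable W : vec C -> Prop.
Hypothesis W_vscale : forall a v, W v -> W (vscale a v).
Hypothesis W_vadd : forall v w, W v -> W w -> W (vadd v w).
Hypothesis W_generator : forall A v, is_generator eps A -> W v -> W (A v).

Lemma invariant_unscale a v : a != 0 -> W (vscale a v) -> W v.
Proof. by move=> a0 /(W_vscale a^-1); rewrite vscaleK. Qed.

Lemma invariant_b_up v : W v -> W (b_up v).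
Proof. by apply: (W_generator (A := @t_plus C)); left. Qed.

Lemma invariant_b_up_dag v : W v -> W (b_up_dag v).
Proof.
move=> Wv; apply: (invariant_unscale etaE_neq0).
by apply: (W_generator (A := t_minus eps)) Wv; right; left.
Qed.

Lemma invariant_b_dn v : W v -> W (b_dn v).
Proof.
move=> Wv; apply: (invariant_unscale etaE_neq0).
by apply: (W_generator (A := u_plus eps)) Wv; do 2 right; left.
Qed.

Lemma invariant_b_dn_dag v : W v -> W (b_dn_dag v).
Proof. by apply: (W_generator (A := @u_minus C)); do 3 right; left. Qed.

Lemma invariant_s_plus v : W v -> W (s_plus v).
Proof.
move=> Wv; have Wvp : W (vscale (etaE eps) (vadd (b_up (b_dn v)) (s_plus v))).
  by apply: (W_generator (A := v_plus eps)) Wv; do 4 right; left.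
have -> : s_plus v = vadd (vadd (b_up (b_dn v)) (s_plus v)) (vscale (-1) (b_up (b_dn v))).
  by apply: vec_ext => j k l; rewrite /vadd /vscale; ring.
apply: W_vadd; first exact: invariant_unscale etaE_neq0 Wvp.
by apply: W_vscale; apply/invariant_b_up/invariant_b_dn.
Qed.

Lemma invariant_s_minus v : W v -> W (s_minus (pw eps) v).
Proof.
move=> Wv; have Wvm : W (vscale (etaE eps) (vsub (b_up_dag (b_dn_dag v)) (s_minus (pw eps) v))).
  by apply: (W_generator (A := v_minus eps)) Wv; do 5 right; left.
have -> : s_minus (pw eps) v =
    vadd (vscale (-1) (vsub (b_up_dag (b_dn_dag v)) (s_minus (pw eps) v))) (b_up_dag (b_dn_dag v)).
  by apply: vec_ext => j k l; rewrite /vadd /vscale /vsub; ring.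
apply: W_vadd; first by apply: W_vscale; exact: invariant_unscale etaE_neq0 Wvm.
by apply/invariant_b_up_dag/invariant_b_dn_dag.
Qed.

Lemma invariant_vac N v : W v -> vanish_from N v -> v <> vzero C -> W (vac C).
Proof.
move=> Wv vN nz.
have [w1 [W1 N1] [nz1 up1]] := lowering_kernel_nonzero (@lowering_b_up C) invariant_b_up Wv vN nz.
have dn_step x : W x /\ b_up x = vzero C -> W (b_dn x) /\ b_up (b_dn x) = vzero C.
  by move=> [Wx upx]; rewrite b_up_b_dn_comm upx b_dn0; split => //; apply: invariant_b_dn.
have [w2 [[W2 up2] N2] [nz2 dn2]] :=
  lowering_kernel_nonzero (@lowering_b_dn C) dn_step (conj W1 up1) N1 nz1.
have sp_step x : W x /\ b_up x = vzero C /\ b_dn x = vzero C ->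
    W (s_plus x) /\ b_up (s_plus x) = vzero C /\ b_dn (s_plus x) = vzero C.
  move=> [Wx [upx dnx]]; rewrite b_up_s_plus_comm b_dn_s_plus_comm upx dnx s_plus0.
  by split => //; apply: invariant_s_plus.
have [w3 [[W3 [up3 dn3]] _] [nz3 sp3]] :=
  lowering_kernel_nonzero (@lowering_s_plus C) sp_step (conj W2 (conj up2 dn2)) N2 nz2.
have w3E := lowest_weight_vac up3 dn3 sp3.
have c0 : vac_coef w3 != 0.
  apply/eqP => c0; apply: nz3; rewrite w3E c0.
  by apply: vec_ext => j k l; rewrite /vscale mul0r.
by apply: (invariant_unscale c0); rewrite -w3E.
Qed.

Lemma invariant_basis a b c : W (vac C) -> W (basis_vec C a b c).
Proof.
move=> Wvac; elim: c => [|c IHc].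
  elim: b => [|b IHb].
    elim: a => [|a IHa] //.
    apply: (invariant_unscale (sqrt_nat_succ_neq0 C a)).
    by rewrite -b_up_dag_basis; apply: invariant_b_up_dag.
  apply: (invariant_unscale (sqrt_nat_succ_neq0 C b)).
  by rewrite -b_dn_dag_basis; apply: invariant_b_dn_dag.
apply: (invariant_unscale (s_minus_coef_neq0 c)).
by rewrite -s_minus_basis; apply: invariant_s_minus.
Qed.

End Invariant.

Lemma generators_irreducible : irreducible_on_D (is_generator eps).
Proof.
move=> W W_fin W0 W_vadd W_vscale W_gen [v [Wv nz]] u [N uN].
have [M vM] := W_fin v Wv.
have Wvac := invariant_vac W_vscale W_vadd W_gen Wv vM nz.
rewrite (basis_expansion uN); apply: big_ind => // x _.
exact/W_vscale/(invariant_basis W_vscale W_vadd W_gen).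
Qed.

End Irreducibility.

Section Boundary.
Variable C : numClosedFieldType.
Variable eps : C.
Hypothesis eps_neq0 : eps != 0.

(* p = 1/2 - 1/eta is exactly the weight for which eta (1/2 - p) = 1. *)
Lemma l_up_vac : l_up eps (vac C) = vac C.
Proof.
have eta0 := etaE_neq0 eps_neq0.
apply: vec_ext => -[|j] [|k] [|l];
rewrite /l_up /opscale /opsub /opadd /opcomp /opid /vscale /vsub /vadd /b_up_dag /b_up /s_z /vac /pw /=;
by field.
Qed.

Lemma l_dn_vac : l_dn eps (vac C) = vac C.
Proof.
have eta0 := etaE_neq0 eps_neq0.
apply: vec_ext => -[|j] [|k] [|l];
rewrite /l_dn /opscale /opsub /opadd /opcomp /opid /vscale /vsub /vadd /b_dn_dag /b_dn /s_z /vac /pw /=;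
by field.
Qed.

Lemma vac_coef_l_up v : vac_coef (l_up eps v) = vac_coef v.
Proof.
rewrite /vac_coef /l_up /opscale /opsub /opadd /opcomp /opid /vscale /vsub /vadd /b_up_dag /s_z /pw /=.
by field; apply: etaE_neq0.
Qed.

Lemma vac_coef_l_dn v : vac_coef (l_dn eps v) = vac_coef v.
Proof.
rewrite /vac_coef /l_dn /opscale /opsub /opadd /opcomp /opid /vscale /vsub /vadd /b_dn_dag /s_z /pw /=.
by field; apply: etaE_neq0.
Qed.


Lemma t_plus_vac : @t_plus C (vac C) = vzero C.
Proof. by apply: vec_ext => j k l; rewrite /t_plus /b_up /vac /= mulr0. Qed.

Lemma u_plus_vac : u_plus eps (vac C) = vzero C.
Proof. by apply: vec_ext => j k l; rewrite /u_plus /opscale /vscale /b_dn /vac /= andbF !mulr0. Qed.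

Lemma v_plus_vac : v_plus eps (vac C) = vzero C.
Proof.
apply: vec_ext => j k l.
rewrite /v_plus /opscale /opadd /opcomp /vscale /vadd /b_up /b_dn /s_plus /vac /vzero.
by rewrite -[l.+1 == 0%N]/false !andbF !mulr0 addr0 mulr0.
Qed.

Lemma vac_coef_t_minus v : vac_coef (t_minus eps v) = 0.
Proof. by rewrite /vac_coef /t_minus /opscale /vscale /= mulr0. Qed.

Lemma vac_coef_u_minus v : vac_coef (@u_minus C v) = 0.
Proof. by []. Qed.

Lemma vac_coef_v_minus v : vac_coef (v_minus eps v) = 0.
Proof. by rewrite /vac_coef /v_minus /opscale /opsub /opcomp /vscale /vsub /= subrr mulr0. Qed.

End Boundary.

(* Splitting on the indices at which b_up^dag, b_dn^dag or s^- meet the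
   boundary, every relation becomes a field identity in the v-coefficients,
   eta, p and the square roots s of naturals n, subject only to s^2 = n. *)
Ltac generalize_sqrtC :=
  repeat match goal with |- context[sqrtC ?x] =>
    have := sqrtCK x; generalize (sqrtC x); intros ? ? end.

Ltac field_with_squares :=
  match goal with
  | H1 : _ ^+ 2 = _, H2 : _ ^+ 2 = _, H3 : _ ^+ 2 = _, H4 : _ ^+ 2 = _ |- _ =>
    first [ring: H1 H2 H3 H4 | field: H1 H2 H3 H4]
  | H1 : _ ^+ 2 = _, H2 : _ ^+ 2 = _, H3 : _ ^+ 2 = _ |- _ =>
    first [ring: H1 H2 H3 | field: H1 H2 H3]
  | H1 : _ ^+ 2 = _, H2 : _ ^+ 2 = _ |- _ => first [ring: H1 H2 | field: H1 H2]
  | H1 : _ ^+ 2 = _ |- _ => first [ring: H1 | field: H1]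
  | _ => first [ring | field]
  end; rewrite ?pnatr_eq0 //.

Ltac opeq_coefficientwise :=
  move=> ? _; apply: vec_ext => j k l;
  cbv beta iota delta [comm opsub opcomp opscale opadd opid opzero vsub vadd vscale vzero
    t_plus t_minus u_plus u_minus v_plus v_minus l_up l_dn l_0
    b_up b_up_dag b_dn b_dn_dag s_plus s_minus s_z];
  repeat match goal with |- context[match ?n with 0%N => _ | S _ => _ end] =>
    destruct n; cbv beta iota end;
  generalize_sqrtC; field_with_squares.

Theorem mainTheorem2 (C : numClosedFieldType) (eps : C) (heps : 0 < eps) :
  let etaE := etaE eps in
  let tp := @t_plus C in let tm := t_minus eps in
  let up := u_plus eps in let um := @u_minus C in
  let vp := v_plus eps in let vm := v_minus eps in
  let lu := l_up eps in let ld := l_dn eps in let l0 := @l_0 C in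
  let Z := @opzero C in
  (* the operators preserve the dense domain *)
  (forall A v, is_generator eps A -> fin_supp v -> fin_supp (A v)) /\
  (* commutation relations of g *)
  (opeq (comm up tp) Z /\ opeq (comm up tm) Z /\
   opeq (comm um tp) Z /\ opeq (comm um tm) Z /\
   opeq (comm up vp) Z /\ opeq (comm um vm) Z /\
   opeq (comm tp vp) Z /\ opeq (comm tm vm) Z /\
   opeq (comm lu up) Z /\ opeq (comm lu um) Z /\
   opeq (comm ld tp) Z /\ opeq (comm ld tm) Z /\
   opeq (comm lu ld) Z) /\
  (opeq (comm lu tp) (opscale (- etaE) tp) /\ opeq (comm lu tm) (opscale etaE tm) /\
   opeq (comm ld up) (opscale (- etaE) up) /\ opeq (comm ld um) (opscale etaE um) /\
   opeq (comm up vm) (opscale etaE tm) /\ opeq (comm um vp) (opscale (- etaE) tp) /\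
   opeq (comm tp vm) (opscale etaE um) /\ opeq (comm tm vp) (opscale (- etaE) up)) /\
  (opeq (comm lu vp) (opscale (- etaE) vp) /\ opeq (comm lu vm) (opscale etaE vm) /\
   opeq (comm ld vp) (opscale (- etaE) vp) /\ opeq (comm ld vm) (opscale etaE vm) /\
   opeq (comm vp vm) (opscale etaE (opadd lu ld)) /\
   opeq (comm tp tm) (opscale etaE l0) /\ opeq (comm up um) (opscale etaE l0)) /\
  (opeq (comm lu l0) Z /\ opeq (comm ld l0) Z /\
   opeq (comm up l0) Z /\ opeq (comm um l0) Z /\
   opeq (comm vp l0) Z /\ opeq (comm vm l0) Z /\
   opeq (comm tp l0) Z /\ opeq (comm tm l0) Z) /\
  (* irreducibility *)
  irreducible_on_D (is_generator eps) /\
  (* boundary requirements *)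
  (lu (@vac C) = @vac C /\ l0 (@vac C) = @vac C /\ ld (@vac C) = @vac C) /\
  (forall v, fin_supp v ->
     vac_coef (lu v) = vac_coef v /\ vac_coef (l0 v) = vac_coef v /\
     vac_coef (ld v) = vac_coef v) /\
  (tp (@vac C) = @vzero C /\ up (@vac C) = @vzero C /\ vp (@vac C) = @vzero C) /\
  (forall v, fin_supp v ->
     vac_coef (tm v) = 0 /\ vac_coef (um v) = 0 /\ vac_coef (vm v) = 0).
Proof.
have eps0 : eps != 0 := lt0r_neq0 heps.
cbv zeta; split; first exact: fin_supp_generator.
do 4 (split; first by repeat split; opeq_coefficientwise).
split; first exact: generators_irreducible (gtr0_real heps) eps0.
split; first by rewrite l_up_vac ?l_dn_vac.
split; first by move=> v _; rewrite vac_coef_l_up ?vac_coef_l_dn.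
split; first by rewrite t_plus_vac u_plus_vac v_plus_vac.
by move=> v _; rewrite vac_coef_t_minus vac_coef_u_minus vac_coef_v_minus.
Qed.
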